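(* Let $\vec\lambda,\vec\mu\in\mathcal P_{m,\ell}$ with $\|\vec\lambda\|=\|\vec\mu\|$. Fix $\lambda\in\mathfrak S\cdot\vec\lambda^{\mathtt{tot}}$, where $\mathfrak S=(\mathfrak S_n)^{\ell}\subset\mathfrak S_{n\ell}$ (the $k$-th factor permuting the indices $(k-1)n+1,\dots,kn$) acts on $\mathbb Z^{n\ell}$ by permuting coordinates. If $\vec\mu^{\mathtt{tot}}\in\lambda+\mathbb Z^{n\ell}_+$, then $\vec\mu\unlhd\vec\lambda$.
   Context: Fix integers $\ell>1$, $n\ge m\ge1$. Partitions have at most $n$ parts, written $\lambda=(\lambda_1\ge\dots\ge\lambda_n\ge0)$; the dominance order on partitions of $m$ is $\lambda\le\mu$ iff $\sum_{j\le k}\lambda_j\le\sum_{j\le k}\mu_j$ for all $k$. An $\ell$-partition of $m$ is $\vec\lambda=(\lambda^{(1)},\dots,\lambda^{(\ell)})$ with $\sum_k|\lambda^{(k)}|=m$; $\mathcal P_{m,\ell}$ denotes the set of these. Define $\vec\lambda^{\mathtt{tot}}\in\mathbb Z_{\ge0}^{n\ell}$ as the concatenation $(\lambda^{(1)}_n,\lambda^{(1)}_{n-1},\dots,\lambda^{(1)}_1,\lambda^{(2)}_n,\dots,\lambda^{(2)}_1,\dots,\lambda^{(\ell)}_n,\dots,\lambda^{(\ell)}_1)$, and $\|\vec\lambda\|$ as the partition of $m$ obtained by sorting all parts of all $\lambda^{(k)}$. With $\{\varepsilon_i\}$ the standard basis of $\mathbb Z^{n\ell}$, let $\mathbb Z^{n\ell}_+=\big(\sum_{1\le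 i<j\le n\ell}\mathbb Z_{\ge0}(\varepsilon_i-\varepsilon_j)\big)\setminus\{0\}$. Define $\vec\lambda\lhd\vec\mu$ iff either $\|\vec\lambda\|<\|\vec\mu\|$ (strictly in dominance), or $\|\vec\lambda\|=\|\vec\mu\|$ and $\vec\lambda^{\mathtt{tot}}-\vec\mu^{\mathtt{tot}}\in\mathbb Z^{n\ell}_+$; $\unlhd$ means $\lhd$ or $=$. *)

From HB Require Import structures.
From mathcomp Require Import all_boot all_order all_algebra all_fingroup.
Set Implicit Arguments. Unset Strict Implicit. Unset Printing Implicit Defensive.
Import GRing.Theory Num.Theory.

(* An l-tuple of partitions with at most n parts: lam k i = lambda^(k+1)_(i+1)
   (everything 0-indexed). *)
Definition lpart (l n : nat) := 'I_l -> 'I_n -> nat.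

Definition is_partition n (p : 'I_n -> nat) : Prop :=
  forall i j : 'I_n, i <= j -> p j <= p i.

Definition is_lpartition (l n m : nat) (lam : lpart l n) : Prop :=
  (forall k, is_partition (lam k)) /\ \sum_(k < l) \sum_(i < n) lam k i = m.

(* ||vec lambda||: all parts of all components, sorted decreasingly
   (padded with zeros; length l*n) *)
Definition lnorm l n (lam : lpart l n) : seq nat :=
  sort geq [seq lam ki.1 ki.2 | ki <- enum {: 'I_l * 'I_n}].

Definition dom_le (s t : seq nat) : Prop :=
  forall k, \sum_(x <- take k s) x <= \sum_(x <- take k t) x.
Definition dom_lt (s t : seq nat) : Prop := dom_le s t /\ s <> t.

(* Index arithmetic for Z^{n l}: position p (0-indexed) = k*n + i *)
Lemma tot_div_lt l n (p : 'I_(l * n)) : p %/ n < l.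
Proof.
case: n p => [|n] [p hp] /=; first by move: hp; rewrite muln0.
by rewrite ltn_divLR.
Qed.

Lemma tot_mod_lt l n (p : 'I_(l * n)) : p %% n < n.
Proof.
case: n p => [|n] [p hp] /=; first by move: hp; rewrite muln0.
by rewrite ltn_pmod.
Qed.

Lemma tot_rev_lt n (i : nat) : i < n -> n.-1 - i < n.
Proof. by case: n => // n _; rewrite ltnS leq_subr. Qed.

(* vec lambda^tot = (lam^(1)_n, ..., lam^(1)_1, ..., lam^(l)_n, ..., lam^(l)_1):
   coordinate k*n + i (0-indexed) is lambda^(k+1)_(n-i), i.e. lam k (n-1-i). *)
Definition tot l n (lam : lpart l n) (p : 'I_(l * n)) : nat :=
  lam (Ordinal (tot_div_lt p))
      (Ordinal (tot_rev_lt (tot_mod_lt p))).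

Definition Zplus N (v : 'I_N -> int) : Prop :=
  (exists c : 'I_N -> 'I_N -> nat,
     forall p : 'I_N,
       v p = (\sum_(i : 'I_N) \sum_(j : 'I_N | (i < j)%N)
               (c i j)%:Z * ((p == i)%:Z - (p == j)%:Z))%R)
  /\ (exists p, v p != 0%R).

Definition llt l n (lam mu : lpart l n) : Prop :=
  dom_lt (lnorm lam) (lnorm mu) \/
  (lnorm lam = lnorm mu /\
   Zplus (fun p => ((tot lam p)%:Z - (tot mu p)%:Z)%R)).

Definition lle l n (lam mu : lpart l n) : Prop := llt lam mu \/ lam = mu.

(* sigma in (S_n)^l inside S_{nl}: permutations preserving each block *)
Definition block_perm l n (s : {perm 'I_(l * n)}) : Prop :=
  forall p : 'I_(l * n), s p %/ n = p %/ n.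

From HB Require Import structures.
From mathcomp Require Import all_boot all_order all_algebra all_fingroup.
From mathcomp Require Import zify.
From Stdlib Require Import FunctionalExtensionality.
Import GRing.Theory Num.Theory.

(* With lambda = s . lam^tot, split mu^tot - lam^tot as (mu^tot - lambda) + (lambda - lam^tot).
   The first summand is in the cone spanned by the positive roots e_i - e_j (i < j) by
   hypothesis.  For the second: lam^tot is nondecreasing inside each block, so permuting it
   within blocks can only increase its partial sums, while the total is unchanged; a vector
   with nonnegative partial sums and zero total is a nonnegative combination of the simple
   roots e_i - e_(i+1).  So mu^tot - lam^tot lies in the cone: if it is zero then mu = lam,
   otherwise mu <| lam since the norms agree. *)

Set Implicit Arguments.
Unset Strict Implicit.
Unset Printing Implicit Defensive.

(* [Zplus v] is [root_cone v /\ v <> 0]. *)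
Definition root_cone N (v : 'I_N -> int) : Prop :=
  exists c : 'I_N -> 'I_N -> nat, forall p : 'I_N,
    v p = (\sum_(i : 'I_N) \sum_(j : 'I_N | (i < j)%N)
             (c i j)%:Z * ((p == i)%:Z - (p == j)%:Z))%R.

Lemma root_coneD N (u v w : 'I_N -> int) :
  (forall p, u p = v p + w p)%R -> root_cone v -> root_cone w -> root_cone u.
Proof.
move=> huvw [cv hv] [cw hw]; exists (fun i j => (cv i j + cw i j)%N) => p.
rewrite huvw hv hw -big_split /=; apply: eq_bigr => i _.
rewrite -big_split /=; apply: eq_bigr => j _.
by rewrite PoszD mulrDl.
Qed.

Lemma sum_ord_eq_mull N (p : 'I_N) (F : 'I_N -> int) :
  (\sum_(i : 'I_N) (p == i)%:Z * F i = F p)%R.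
Proof.
rewrite (bigD1 p) //= eqxx mul1r big1 ?addr0 // => i hi.
by rewrite eq_sym (negbTE hi) mul0r.
Qed.

Lemma root_combE N (c : 'I_N -> 'I_N -> nat) (p : 'I_N) :
  (forall i j : 'I_N, (j <= i)%N -> c i j = 0%N) ->
  (\sum_(i : 'I_N) \sum_(j : 'I_N | (i < j)%N)
     (c i j)%:Z * ((p == i)%:Z - (p == j)%:Z) =
   \sum_(j : 'I_N) (c p j)%:Z - \sum_(i : 'I_N) (c i p)%:Z)%R.
Proof.
move=> c_lower.
have split_flow (i : 'I_N) :
    (\sum_(j : 'I_N | (i < j)%N) (c i j)%:Z * ((p == i)%:Z - (p == j)%:Z) =
     \sum_(j : 'I_N) (c i j)%:Z * (p == i)%:Z - \sum_(j : 'I_N) (c i j)%:Z * (p == j)%:Z)%R.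
  rewrite -sumrB big_mkcond /=; apply: eq_bigr => j _.
  by case: ltnP => [_|/c_lower ->]; rewrite ?mulrBr // !mul0r subrr.
under eq_bigr => i _ do rewrite split_flow.
rewrite sumrB; congr (_ - _)%R.
- rewrite -(sum_ord_eq_mull p (fun i => \sum_j (c i j)%:Z)%R).
  by apply: eq_bigr => i _; rewrite mulr_sumr; apply: eq_bigr => j _; rewrite mulrC.
- apply: eq_bigr => i _.
  by rewrite -(sum_ord_eq_mull p (fun j => (c i j)%:Z)%R); apply: eq_bigr => j _; rewrite mulrC.
Qed.

Lemma sum_ord_eqn_mull N (a : nat) (F : nat -> int) :
  (\sum_(j : 'I_N) (nat_of_ord j == a)%:Z * F j = (a < N)%:Z * F a)%R.
Proof.
case: (ltnP a N) => ha.
- rewrite (bigD1 (Ordinal ha)) //= eqxx mul1r big1 ?addr0 ?mul1r // => j hj.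
  suff /negbTE -> : nat_of_ord j != a by rewrite mul0r.
  by apply: contra hj => /eqP e; apply/eqP/val_inj.
- rewrite mul0r big1 // => j _.
  by rewrite (ltn_eqF (leq_trans (ltn_ord j) ha)) mul0r.
Qed.

Section PartialSums.

Variables (N : nat) (v : 'I_N -> int).

Definition psum k := (\sum_(p : 'I_N | (p < k)%N) v p)%R.

Lemma psum0 : psum 0 = 0%R.
Proof. by rewrite /psum big1 // => p; rewrite ltn0. Qed.

Lemma psumN : psum N = (\sum_(p : 'I_N) v p)%R.
Proof. by apply: eq_bigl => p; rewrite ltn_ord. Qed.

Lemma psumS (p : 'I_N) : v p = (psum p.+1 - psum p)%R.
Proof.
rewrite /psum (bigD1 p) //= (eq_bigl (fun q : 'I_N => (q < p)%N)) ?addrK //.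
by move=> q; rewrite ltnS [(q < p)%N]ltn_neqAle andbC.
Qed.

(* Put weight psum (i+1) on the simple root e_i - e_(i+1): the vector telescopes. *)
Lemma root_cone_psum :
  (forall k, 0 <= psum k)%R -> (\sum_(p : 'I_N) v p = 0)%R -> root_cone v.
Proof.
move=> psum_ge0 sum_v.
pose c (i j : 'I_N) := ((nat_of_ord j == i.+1) * absz (psum j))%N.
have cE i j : ((c i j)%:Z = (nat_of_ord j == i.+1)%:Z * psum j)%R.
  by rewrite /c PoszM abszE ger0_norm.
exists c => p; rewrite root_combE => [|i j ji]; last first.
  by rewrite /c (ltn_eqF (leq_ltn_trans ji (ltnSn i))) mul0n.
rewrite psumS; congr (_ - _)%R.
- under eq_bigr do rewrite cE.
  rewrite sum_ord_eqn_mull; case: ltnP => [_|]; first by rewrite mul1r.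
  move=> hN; have -> : p.+1 = N by apply/eqP; rewrite eqn_leq hN ltn_ord.
  by rewrite psumN sum_v mulr0.
- case: p => [[|q] hq] /=; first by rewrite psum0 big1 // => i _; rewrite cE mul0r.
  under eq_bigr => i _ do rewrite cE eqSS eq_sym.
  by rewrite (sum_ord_eqn_mull _ q (fun=> psum q.+1)) (ltnW hq) mul1r.
Qed.

End PartialSums.

Lemma leq_sum_separated (T : finType) (A B : {set T}) (x : T -> nat) :
  #|A| = #|B| -> (forall a b, a \in A -> b \in B -> x a <= x b) ->
  \sum_(a in A) x a <= \sum_(b in B) x b.
Proof.
move=> cardAB xAB; pose M := \max_(a in A) x a.
apply: (@leq_trans (#|A| * M)).
  by rewrite -sum_nat_const; apply: leq_sum => a aA; exact: leq_bigmax_cond.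
rewrite cardAB -sum_nat_const; apply: leq_sum => b bB.
by apply/bigmax_leqP => a aA; exact: xAB.
Qed.

Lemma leq_prefix_sum_block_perm N n (s : {perm 'I_N}) (x : 'I_N -> nat) k :
  (forall p, s p %/ n = p %/ n) ->
  (forall p q : 'I_N, p %/ n = q %/ n -> p <= q -> x p <= x q) ->
  \sum_(p : 'I_N | p < k) x p <= \sum_(p : 'I_N | p < k) x (s p).
Proof.
move=> s_block x_mono.
pose K := [set p : 'I_N | p < k]; pose S := s @: K.
have -> : \sum_(p : 'I_N | p < k) x (s p) = \sum_(q in S) x q.
  by rewrite big_imset /=; [apply: eq_bigl => p; rewrite inE | move=> ? ? _ _; apply: perm_inj].
have -> : \sum_(p : 'I_N | p < k) x p = \sum_(p in K) x p.
  by apply: eq_bigl => p; rewrite inE.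
rewrite (big_setID (A := K) S) (big_setID (A := S) K) setIC leq_add2l.
apply: leq_sum_separated.
  by rewrite !cardsD [S :&: K]setIC card_imset //; exact: perm_inj.
(* An index leaving the prefix and one entering it lie in the same block. *)
move=> a b; rewrite !inE => /andP[aS aK] /andP[bK /imsetP[q qK b_sq]].
subst b; rewrite inE in qK; rewrite -leqNgt in bK.
have k_le_sa : k <= (s^-1 a)%g.
  rewrite leqNgt; apply: contra aS => sak; apply/imsetP; exists (s^-1 a)%g.
    by rewrite inE.
  by rewrite permKV.
have a_le_sq : a <= s q := ltnW (leq_trans aK bK).
apply: (x_mono _ _ _ a_le_sq); apply/eqP; rewrite eqn_leq leq_div2r //=.
rewrite s_block -(permKV s a) s_block leq_div2r //.
exact: ltnW (leq_trans qK k_le_sa).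
Qed.

Lemma tot_mono l n (lam : lpart l n) : (forall k, is_partition (lam k)) ->
  forall p q : 'I_(l * n), p %/ n = q %/ n -> p <= q -> tot lam p <= tot lam q.
Proof.
move=> lam_part p q pq_block p_le_q; rewrite /tot.
have -> : Ordinal (tot_div_lt p) = Ordinal (tot_div_lt q) by apply: val_inj.
apply: lam_part => /=; apply: leq_sub2l.
by move: p_le_q; rewrite {1}(divn_eq p n) {1}(divn_eq q n) pq_block leq_add2l.
Qed.

Lemma tot_inj l n : injective (@tot l n).
Proof.
move=> lam mu tot_eq.
apply: functional_extensionality => k; apply: functional_extensionality => i.
have n_gt0 : 0 < n := leq_ltn_trans (leq0n i) (ltn_ord i).
have ri_lt : n.-1 - i < n := tot_rev_lt (ltn_ord i).
have p_lt : k * n + (n.-1 - i) < l * n by have := ltn_ord k; nia.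
have := congr1 (fun f => f (Ordinal p_lt)) tot_eq; rewrite /tot.
have -> : Ordinal (tot_div_lt (Ordinal p_lt)) = k.
  by apply: val_inj => /=; rewrite divnMDl // divn_small // addn0.
have -> : Ordinal (tot_rev_lt (tot_mod_lt (Ordinal p_lt))) = i.
  apply: val_inj => /=; rewrite modnMDl modn_small // subKn //.
  by rewrite -ltnS prednK.
done.
Qed.

Lemma Posz_sum (I : finType) (P : pred I) (F : I -> nat) :
  Posz (\sum_(i | P i) F i) = (\sum_(i | P i) Posz (F i))%R.
Proof. exact: (big_morph Posz PoszD). Qed.

Lemma root_cone_block_perm l n (lam : lpart l n) (s : {perm 'I_(l * n)}) :
  (forall k, is_partition (lam k)) -> block_perm s ->
  root_cone (fun p => ((tot lam (s p))%:Z - (tot lam p)%:Z)%R).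
Proof.
move=> lam_part s_block; apply: root_cone_psum => [k|].
  rewrite /psum sumrB -!Posz_sum subr_ge0 lez_nat.
  exact: leq_prefix_sum_block_perm s_block (tot_mono lam_part).
apply/eqP; rewrite sumrB subr_eq0 -!Posz_sum eqz_nat; apply/eqP.
by rewrite [RHS](reindex_inj (@perm_inj _ s)).
Qed.

Theorem lemma1p3 (l n m : nat) (hl : 1 < l) (hnm : m <= n) (hm : 1 <= m)
  (lam mu : lpart l n)
  (hlam : is_lpartition m lam) (hmu : is_lpartition m mu)
  (hnorm : lnorm lam = lnorm mu)
  (s : {perm 'I_(l * n)}) (hs : block_perm s) :
  Zplus (fun p => ((tot mu p)%:Z - (tot lam (s p))%:Z)%R) ->
  lle mu lam.
Proof.
move=> [mu_above _].
have lam_below := root_cone_block_perm hlam.1 hs.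
have mu_lam_cone : root_cone (fun p => ((tot mu p)%:Z - (tot lam p)%:Z)%R).
  by apply: root_coneD mu_above lam_below => p; rewrite addrA subrK.
have [/forallP tot_eq | /forallPn [p tot_neq]] := boolP [forall p, tot mu p == tot lam p].
  by right; apply: tot_inj; apply: functional_extensionality => p; apply/eqP.
left; right; split; first by rewrite hnorm.
by split; last by exists p; rewrite subr_eq0 eqz_nat.
Qed.
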